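(* For a group $G$ the following are equivalent: (1) $G$ is non-abelian; (2) there exist pairwise disjoint subsets $E_1,E_2,E_3,E_4,E_5$ of $G$ and elements $g_1,g_2\in G$ such that $g_1E_1=E_2=g_2^{-1}E_4$ and $E_3=g_1^{-1}E_5=g_2E_1$.
   Context: Here $gE=\{gx:x\in E\}$ denotes left translation in $G$. *)

Set Implicit Arguments.

Record Group := {
  carrier :> Type;
  gmul : carrier -> carrier -> carrier;
  gone : carrier;
  ginv : carrier -> carrier;
  gmulA : forall x y z, gmul x (gmul y z) = gmul (gmul x y) z;
  gmul1 : forall x, gmul gone x = x;
  gmulV : forall x, gmul (ginv x) x = gone
}.

Definition abelian (G : Group) : Prop := forall x y : G, gmul G x y = gmul G y x.

Definition ltrans {G : Group} (g : G) (E : G -> Prop) : G -> Prop :=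
  fun y => exists x, E x /\ y = gmul G g x.

Definition disjoint {G : Group} (A B : G -> Prop) : Prop :=
  forall x, ~ (A x /\ B x).

Definition nonempty {G : Group} (A : G -> Prop) : Prop := exists x, A x.

Definition pairwise_disjoint5 {G : Group} (E1 E2 E3 E4 E5 : G -> Prop) : Prop :=
  disjoint E1 E2 /\ disjoint E1 E3 /\ disjoint E1 E4 /\ disjoint E1 E5 /\
  disjoint E2 E3 /\ disjoint E2 E4 /\ disjoint E2 E5 /\
  disjoint E3 E4 /\ disjoint E3 E5 /\ disjoint E4 E5.

(* If [x] lies in [E1], the equations force [g2 g1 x] into [E4] and [g1 g2 x]
   into [E5]; disjointness of [E4] and [E5] thus prevents [g1] and [g2] from
   commuting.  Conversely, if [a b <> b a], the singletons [{1}], [{a}], [{b}],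
   [{b a}], [{a b}] satisfy the equations with [g1 = a] and [g2 = b], and they
   are pairwise distinct because every coincidence among [1, a, b, b a, a b]
   would make [a] and [b] commute. *)

From Stdlib Require Import Ensembles FunctionalExtensionality PropExtensionality
  Classical.

Section GroupFacts.

Context {G : Group}.
Local Notation "x * y" := (gmul G x y).
Local Notation "1" := (gone G).
Local Notation inv := (ginv G).

Lemma mulKg (x y : G) : inv x * (x * y) = y.
Proof. now rewrite gmulA, gmulV, gmul1. Qed.

Lemma mulgV (x : G) : x * inv x = 1.
Proof.
  rewrite <- (mulKg (inv x) (x * inv x)), (gmulA G (inv x)), gmulV, gmul1.
  apply gmulV.
Qed.

Lemma mulVKg (x y : G) : x * (inv x * y) = y.
Proof. now rewrite gmulA, mulgV, gmul1. Qed.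

Lemma mulg1 (x : G) : x * 1 = x.
Proof. now rewrite <- (gmulV G x), mulVKg. Qed.

Lemma mulg_idl (x y : G) : y * x = x -> y = 1.
Proof. intro Hyx. now rewrite <- (mulg1 y), <- (mulgV x), gmulA, Hyx. Qed.

Lemma mulg_idr (x y : G) : x * y = x -> y = 1.
Proof. intro Hxy. now rewrite <- (mulKg x y), Hxy, gmulV. Qed.

Lemma mulg_eq1C (x y : G) : x * y = 1 -> y * x = 1.
Proof.
  intro Hxy.
  assert (Hy : y = inv x) by now rewrite <- (mulKg x y), Hxy, mulg1.
  now rewrite Hy, gmulV.
Qed.

Lemma noncommuting_neq1l (x y : G) : x * y <> y * x -> x <> 1.
Proof. intros Hxy ->. apply Hxy. now rewrite gmul1, mulg1. Qed.

Lemma noncommuting_neq1r (x y : G) : x * y <> y * x -> y <> 1.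
Proof. intro Hxy. apply (noncommuting_neq1l y x). congruence. Qed.

Lemma not_abelian_noncommuting : ~ abelian G -> exists x y : G, x * y <> y * x.
Proof.
  intro Hna. apply not_all_ex_not in Hna as [x Hx].
  apply not_all_ex_not in Hx as [y Hy]. now exists x, y.
Qed.

Lemma ltrans_mem (g x : G) (E : G -> Prop) : E x -> ltrans g E (g * x).
Proof. now exists x. Qed.

Lemma ltrans_invP (g y : G) (E : G -> Prop) : ltrans (inv g) E y <-> E (g * y).
Proof.
  split.
  - intros [x [Ex ->]]. now rewrite mulVKg.
  - intro Egy. exists (g * y). now rewrite mulKg.
Qed.

Lemma ltrans_singleton (g x : G) : ltrans g (Singleton G x) = Singleton G (g * x).
Proof.
  apply functional_extensionality; intro y; apply propositional_extensionality.
  split.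
  - intros [x' [Hx' ->]]. destruct Hx'. constructor.
  - intro Hy. destruct Hy. now exists x.
Qed.

Lemma nonempty_singleton (x : G) : nonempty (Singleton G x).
Proof. now exists x. Qed.

Lemma disjoint_singleton (x y : G) : x <> y -> disjoint (Singleton G x) (Singleton G y).
Proof. intros Hxy z [Hx Hy]. destruct Hx. now destruct Hy. Qed.

Lemma noncommuting_singletons_disjoint (a b : G) : a * b <> b * a ->
  pairwise_disjoint5 (Singleton G 1) (Singleton G a) (Singleton G b)
    (Singleton G (b * a)) (Singleton G (a * b)).
Proof.
  intro Hab.
  pose proof (noncommuting_neq1l a b Hab) as Ha.
  pose proof (noncommuting_neq1r a b Hab) as Hb.
  repeat split; apply disjoint_singleton; intro E.
  - now apply Ha.
  - now apply Hb.
  - apply Hab. rewrite (mulg_eq1C b a (eq_sym E)). congruence.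
  - apply Hab. rewrite (mulg_eq1C a b (eq_sym E)). congruence.
  - subst. now apply Hab.
  - now apply Hb, (mulg_idl a).
  - now apply Hb, (mulg_idr a).
  - now apply Ha, (mulg_idr b).
  - now apply Ha, (mulg_idl b).
  - now apply Hab.
Qed.

Lemma translation_configuration_noncommuting (E1 E2 E3 E4 E5 : G -> Prop) (g1 g2 : G) :
  nonempty E1 -> disjoint E4 E5 ->
  ltrans g1 E1 = E2 -> E2 = ltrans (inv g2) E4 ->
  E3 = ltrans (inv g1) E5 -> E3 = ltrans g2 E1 ->
  g1 * g2 <> g2 * g1.
Proof.
  intros [x Ex] D45 H12 H24 H35 H31 Hcomm.
  assert (E4_g2g1x : E4 (g2 * (g1 * x))).
  { apply (ltrans_invP g2 (g1 * x) E4). rewrite <- H24, <- H12.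
    now apply ltrans_mem. }
  assert (E5_g1g2x : E5 (g1 * (g2 * x))).
  { apply (ltrans_invP g1 (g2 * x) E5). rewrite <- H35, H31.
    now apply ltrans_mem. }
  apply (D45 (g1 * (g2 * x))). split; [|exact E5_g1g2x].
  now rewrite gmulA, Hcomm, <- gmulA.
Qed.

End GroupFacts.

Theorem mainTheorem11 (G : Group) :
  ~ abelian G <->
  exists (E1 E2 E3 E4 E5 : G -> Prop) (g1 g2 : G),
    nonempty E1 /\ nonempty E2 /\ nonempty E3 /\ nonempty E4 /\ nonempty E5 /\
    pairwise_disjoint5 E1 E2 E3 E4 E5 /\
    ltrans g1 E1 = E2 /\ E2 = ltrans (ginv G g2) E4 /\
    E3 = ltrans (ginv G g1) E5 /\ E3 = ltrans g2 E1.
Proof.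
  split.
  - intro Hna. destruct (not_abelian_noncommuting Hna) as [a [b Hab]].
    exists (Singleton G (gone G)), (Singleton G a), (Singleton G b),
      (Singleton G (gmul G b a)), (Singleton G (gmul G a b)), a, b.
    do 5 (split; [apply nonempty_singleton|]).
    split; [now apply noncommuting_singletons_disjoint|].
    repeat split.
    + now rewrite ltrans_singleton, mulg1.
    + now rewrite ltrans_singleton, mulKg.
    + now rewrite ltrans_singleton, mulKg.
    + now rewrite ltrans_singleton, mulg1.
  - intros (E1 & E2 & E3 & E4 & E5 & g1 & g2 & HE1 & _ & _ & _ & _ &
      (_ & _ & _ & _ & _ & _ & _ & _ & _ & D45) & H12 & H24 & H35 & H31) Hab.
    exact (translation_configuration_noncommuting E1 E2 E3 E4 E5 g1 g2
      HE1 D45 H12 H24 H35 H31 (Hab g1 g2)).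
Qed.
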